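(* $\mathbf{K}^{\nabla\bullet}$ is sound and strongly complete with respect to the class of serial frames: for every set $\Gamma\cup\{\phi\}\subseteq\mathcal{L}(\nabla,\bullet)$, $\Gamma\vdash_{\mathbf{K}^{\nabla\bullet}}\phi$ iff for every Kripke model $\mathcal{M}$ with serial accessibility relation and every state $s$, if $\mathcal{M},s\vDash\Gamma$ then $\mathcal{M},s\vDash\phi$.
   Context: $\mathcal{L}(\nabla,\bullet)$: $\phi::=p\mid\neg\phi\mid\phi\land\phi\mid\nabla\phi\mid\bullet\phi$ over a nonempty set $\mathbf{P}$ of propositional variables; $\Delta\phi:=\neg\nabla\phi$, $\circ\phi:=\neg\bullet\phi$. Kripke models $\langle S,R,V\rangle$: $s\vDash\nabla\phi$ iff there are $t,u$ with $sRt$, $sRu$, $t\vDash\phi$, $u\nvDash\phi$; $s\vDash\bullet\phi$ iff $s\vDash\phi$ and there is $t$ with $sRt$, $t\nvDash\phi$. $R$ is serial if every state has an $R$-successor. The Hilbert system $\mathbf{K}^{\nabla\bullet}$ has axioms: A0 all propositional tautologies; A1 $\bullet\phi\to\phi$; A2 $\nabla\phi\leftrightarrow\nabla\neg\phi$; A3 $\bullet(\psi\to\phi)\land\phi\to\bullet\phi$; A4 $\nabla(\phi\land\psi)\to\nabla\phi\vee\nabla\psi$; A5 $\bullet(\phi\land\psi)\to\bullet\phi\vee\bullet\psi$; A6 $\nabla\phi\to\bullet\phi\vee\bullet\neg\phi$; A7 $\bullet(\phi\to\psi)\land\bullet(\neg\phi\to\chi)\to\nabla\phi$; rules R1 $\phi/\Delta\phi$;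 R2 $\phi/\circ\phi$; R3 $\phi\leftrightarrow\psi/\Delta\phi\leftrightarrow\Delta\psi$; R4 $\phi\leftrightarrow\psi/\circ\phi\leftrightarrow\circ\psi$; MP. $\Gamma\vdash\phi$ means $\vdash(\gamma_1\land\dots\land\gamma_n)\to\phi$ for some finite subset of $\Gamma$. *)

From Stdlib Require Import List.
Import ListNotations.
Set Implicit Arguments.

Section Logic.
Variable P : Type.

Inductive form : Type :=
| Var : P -> form
| Neg : form -> form
| And : form -> form -> form
| Nabla : form -> form
| Bullet : form -> form.

Definition Delta (a : form) : form := Neg (Nabla a).
Definition Circ (a : form) : form := Neg (Bullet a).
Definition Imp (a b : form) : form := Neg (And a (Neg b)).
Definition Or (a b : form) : form := Neg (And (Neg a) (Neg b)).
Definition Iff (a b : form) : form := And (Imp a b) (Imp b a).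

(* Propositional tautologies: formulas true under every Boolean valuation that
   treats variables and modal formulas (Nabla _, Bullet _) as atoms. *)
Fixpoint beval (v : form -> bool) (a : form) : bool :=
  match a with
  | Var _ => v a
  | Neg b => negb (beval v b)
  | And b c => andb (beval v b) (beval v c)
  | Nabla _ => v a
  | Bullet _ => v a
  end.

Definition tautology (a : form) : Prop := forall v, beval v a = true.

Inductive provable : form -> Prop :=
| A0 : forall a, tautology a -> provable a
| A1 : forall a, provable (Imp (Bullet a) a)
| A2 : forall a, provable (Iff (Nabla a) (Nabla (Neg a)))
| A3 : forall a b, provable (Imp (And (Bullet (Imp b a)) a) (Bullet a))
| A4 : forall a b, provable (Imp (Nabla (And a b)) (Or (Nabla a) (Nabla b)))
| A5 : forall a b, provable (Imp (Bullet (And a b)) (Or (Bullet a) (Bullet b)))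
| A6 : forall a, provable (Imp (Nabla a) (Or (Bullet a) (Bullet (Neg a))))
| A7 : forall a b c, provable (Imp (And (Bullet (Imp a b)) (Bullet (Imp (Neg a) c))) (Nabla a))
| R1 : forall a, provable a -> provable (Delta a)
| R2 : forall a, provable a -> provable (Circ a)
| R3 : forall a b, provable (Iff a b) -> provable (Iff (Delta a) (Delta b))
| R4 : forall a b, provable (Iff a b) -> provable (Iff (Circ a) (Circ b))
| MP : forall a b, provable (Imp a b) -> provable a -> provable b.

Definition bigAnd (g : form) (l : list form) : form := fold_left And l g.

(* Gamma |- phi : for some finite subset {g1,...,gn} of Gamma,
   |- (g1 /\ ... /\ gn) -> phi; the case n = 0 means |- phi. *)
Definition derives (Gamma : form -> Prop) (phi : form) : Prop :=
  provable phi \/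
  exists g l, Gamma g /\ (forall x, In x l -> Gamma x) /\ provable (Imp (bigAnd g l) phi).

Fixpoint sat (S : Type) (R : S -> S -> Prop) (V : P -> S -> Prop) (s : S) (a : form) : Prop :=
  match a with
  | Var p => V p s
  | Neg b => ~ sat R V s b
  | And b c => sat R V s b /\ sat R V s c
  | Nabla b => exists t u, R s t /\ R s u /\ sat R V t b /\ ~ sat R V u b
  | Bullet b => sat R V s b /\ exists t, R s t /\ ~ sat R V t b
  end.

Definition serial (S : Type) (R : S -> S -> Prop) : Prop := forall s, exists t, R s t.

End Logic.

(* Soundness is a direct check of the axioms and rules, valid on all Kripke models.
   Completeness uses a canonical model of maximal consistent sets.  Neither [Nabla] nor
   [Bullet] defines necessity, but in a serial model "X holds at every successor" is
   expressed by (X /\ Circ X) \/ (~X /\ Delta X /\ Bullet ~X); calling [boxed D] the set of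
   formulas of this shape in [D], the canonical relation is "[boxed D] is contained in the
   successor".  Axioms A2-A7 make [boxed D] closed under conjunction and provable
   implication, so every formula whose negation is not in [boxed D] lies in some successor;
   with this the truth lemma for [Nabla] and [Bullet] goes through, and seriality of the
   canonical relation comes from the refutability of the negation of a tautology. *)

From Stdlib Require Import List Bool Classical ClassicalEpsilon.
From mathcomp Require classical_sets.
Import ListNotations.
Set Implicit Arguments.
Unset Strict Implicit.

Ltac boolean_cases v :=
  unfold Imp, Or, Iff, Delta, Circ in *; simpl in *; intros;
  repeat match goal with
  | |- context [beval v ?x] => destruct (beval v x)
  | H : context [beval v ?x] |- _ => destruct (beval v x)
  | |- context [v ?x] => destruct (v x)
  | H : context [v ?x] |- _ => destruct (v x)
  end; simpl in *; try discriminate; try reflexivity; auto.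

Ltac boolean_tauto := let v := fresh "v" in intro v; boolean_cases v.

Section TautologicalConsequence.
Variable P : Type.

Lemma provable_entails1 (a b : form P) :
  provable a -> (forall v, beval v a = true -> beval v b = true) -> provable b.
Proof.
  intros Ha H. apply (@MP _ a b); [|exact Ha].
  apply A0. intros v. specialize (H v). boolean_cases v.
Qed.

Lemma provable_entails2 (a c b : form P) : provable a -> provable c ->
  (forall v, beval v a = true -> beval v c = true -> beval v b = true) -> provable b.
Proof.
  intros Ha Hc H. apply (@MP _ c b); [|exact Hc].
  apply (provable_entails1 Ha). intros v Hv. specialize (H v Hv). boolean_cases v.
Qed.

Lemma provable_bullet_congr (a b : form P) :
  provable (Iff a b) -> provable (Iff (Bullet a) (Bullet b)).
Proof. intros H. apply (provable_entails1 (R4 H)). boolean_tauto. Qed.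

Lemma provable_nabla_congr (a b : form P) :
  provable (Iff a b) -> provable (Iff (Nabla a) (Nabla b)).
Proof. intros H. apply (provable_entails1 (R3 H)). boolean_tauto. Qed.
End TautologicalConsequence.

Section Consistency.
Variables (P : Type) (p0 : P).

(* A provable formula needs some propositional variable: this is the role of [p0]. *)
Definition verum : form P := Imp (Var p0) (Var p0).

Fixpoint conjs (l : list (form P)) : form P :=
  match l with
  | [] => verum
  | a :: l => And a (conjs l)
  end.

Definition entails (l : list (form P)) (b : form P) : Prop :=
  forall v, beval v (conjs l) = true -> beval v b = true.

Lemma beval_conjs v l :
  beval v (conjs l) = true <-> Forall (fun x => beval v x = true) l.
Proof.
  induction l as [|a l IH]; simpl.
  - split; [constructor|intros _; boolean_cases v].
  - rewrite andb_true_iff, IH, Forall_cons_iff. reflexivity.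
Qed.

Lemma beval_bigAnd v g l : beval v (bigAnd g l) = beval v (conjs (g :: l)).
Proof.
  unfold bigAnd. revert g.
  induction l as [|a l IH]; intros g; simpl in *.
  - boolean_cases v.
  - rewrite IH. simpl. apply eq_sym, andb_assoc.
Qed.

Definition inconsistent (G : form P -> Prop) : Prop :=
  exists l, Forall G l /\ provable (Neg (conjs l)).

Definition maximal_consistent (D : form P -> Prop) : Prop :=
  ~ inconsistent D /\ forall a, D a \/ D (Neg a).

Lemma inconsistent_mono (G1 G2 : form P -> Prop) :
  (forall x, G1 x -> G2 x) -> inconsistent G1 -> inconsistent G2.
Proof.
  intros H [l [Hl Hp]]. exists l. split; [exact (Forall_impl _ H Hl)|exact Hp].
Qed.

Lemma Forall_add_split (G : form P -> Prop) b l :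
  Forall (fun x => G x \/ x = b) l -> exists m, Forall G m /\ entails (b :: m) (conjs l).
Proof.
  induction 1 as [|x l Hx _ [m [Hm Hent]]].
  - exists []. split; [constructor|]. intros v _. apply beval_conjs. constructor.
  - destruct Hx as [Gx|<-].
    + exists (x :: m). split; [constructor; assumption|].
      intros v Hv. specialize (Hent v). simpl in *. boolean_cases v.
    + exists m. split; [exact Hm|]. intros v Hv. specialize (Hent v). simpl in *.
      boolean_cases v.
Qed.

Lemma inconsistent_add (G : form P -> Prop) b :
  inconsistent (fun x => G x \/ x = b) ->
  exists m, Forall G m /\ provable (Imp (conjs m) (Neg b)).
Proof.
  intros [l [Hl Hp]]. destruct (Forall_add_split Hl) as [m [Hm Hent]].
  exists m. split; [exact Hm|]. apply (provable_entails1 Hp).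
  intros v Hv. specialize (Hent v). simpl in *. boolean_cases v.
Qed.

Lemma Forall_union_chain (G : form P -> Prop) (F : (form P -> Prop) -> Prop) l :
  (forall X Y, F X -> F Y -> (forall x, X x -> Y x) \/ (forall x, Y x -> X x)) ->
  Forall (fun x => G x \/ exists2 X, F X & X x) l ->
  Forall G l \/ exists2 X, F X & Forall (fun x => G x \/ X x) l.
Proof.
  intros Hch. induction 1 as [|x l Hx _ [Hl|[X FX Hl]]].
  - left. constructor.
  - destruct Hx as [Gx|[Y FY Yx]].
    + left. constructor; assumption.
    + right. exists Y; [exact FY|]. constructor; [right; exact Yx|].
      refine (Forall_impl _ _ Hl). auto.
  - right. destruct Hx as [Gx|[Y FY Yx]].
    + exists X; [exact FX|]. constructor; [left|]; assumption.
    + destruct (Hch X Y FX FY) as [XY|YX].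
      * exists Y; [exact FY|]. constructor; [right; exact Yx|].
        refine (Forall_impl _ _ Hl). intros z [Gz|Xz]; auto.
      * exists X; [exact FX|]. constructor; [right; auto|exact Hl].
Qed.

Lemma inconsistent_of_add_both (G : form P -> Prop) a :
  inconsistent (fun x => G x \/ x = a) -> inconsistent (fun x => G x \/ x = Neg a) ->
  inconsistent G.
Proof.
  intros Ha Hna.
  destruct (inconsistent_add Ha) as [m1 [Hm1 Hp1]].
  destruct (inconsistent_add Hna) as [m2 [Hm2 Hp2]].
  exists (m1 ++ m2). split; [apply Forall_app; split; assumption|].
  apply (provable_entails2 Hp1 Hp2). intros v Hv1 Hv2.
  apply negb_true_iff, not_true_iff_false. intros Hc.
  apply beval_conjs, Forall_app in Hc. destruct Hc as [Hc1 Hc2].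
  apply beval_conjs in Hc1, Hc2. simpl in Hv1, Hv2.
  rewrite Hc1 in Hv1. rewrite Hc2 in Hv2. boolean_cases v.
Qed.

(* Zorn is applied to the sets [X] with [G \/ X] consistent rather than to the consistent
   supersets of [G], so that the union of the empty chain is still admissible. *)
Lemma lindenbaum (G : form P -> Prop) :
  ~ inconsistent G -> exists D, maximal_consistent D /\ forall x, G x -> D x.
Proof.
  intros HG.
  destruct (@classical_sets.Zorn_bigcup (form P)
              (fun X => ~ inconsistent (fun x => G x \/ X x))) as [A [HA Amax]].
  { intros F HF Hch [l [Hl Hp]]. cbv in Hl.
    destruct (Forall_union_chain Hch Hl) as [Hl'|[X FX Hl']].
    - apply HG. exists l. split; assumption.
    - apply (HF X FX). exists l. split; assumption. }
  exists (fun x => G x \/ A x). split; [split; [exact HA|]|auto].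
  assert (Hadd : forall b, ~ (G b \/ A b) ->
            inconsistent (fun x => (G x \/ A x) \/ x = b)).
  { intros b Hb. apply NNPP. intros Hc.
    apply (Amax (fun x => A x \/ x = b)).
    - split; [intros x Ax; left; exact Ax|]. intros Hsub.
      apply Hb. right. exact (Hsub b (or_intror eq_refl)).
    - intros Hi. apply Hc. revert Hi. apply inconsistent_mono. tauto. }
  intros a. apply NNPP. intros Hn.
  apply HA, (inconsistent_of_add_both (a := a)); apply Hadd; tauto.
Qed.
End Consistency.

Section Soundness.
Variables (P S : Type) (R : S -> S -> Prop) (V : P -> S -> Prop).

Definition truth_valuation (s : S) (a : form P) : bool :=
  if excluded_middle_informative (sat R V s a) then true else false.

Lemma truth_valuation_true s a : truth_valuation s a = true <-> sat R V s a.
Proof.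
  unfold truth_valuation.
  destruct excluded_middle_informative as [H|H]; split; congruence || tauto.
Qed.

Lemma beval_truth_valuation s a : beval (truth_valuation s) a = true <-> sat R V s a.
Proof.
  induction a as [p|a IH|a IHa b IHb|a _|a _]; try apply truth_valuation_true; simpl.
  - rewrite negb_true_iff, <- not_true_iff_false, IH. reflexivity.
  - rewrite andb_true_iff, IHa, IHb. reflexivity.
Qed.

Lemma sat_Imp s a b : sat R V s (Imp a b) <-> (sat R V s a -> sat R V s b).
Proof. simpl. split; [intros H Ha; apply NNPP; auto|tauto]. Qed.

Lemma sat_Or s a b : sat R V s (Or a b) <-> sat R V s a \/ sat R V s b.
Proof. simpl. split; [intros H; apply NNPP; tauto|tauto]. Qed.

Lemma sat_Iff s a b : sat R V s (Iff a b) <-> (sat R V s a <-> sat R V s b).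
Proof.
  change (sat R V s (Iff a b)) with (sat R V s (Imp a b) /\ sat R V s (Imp b a)).
  rewrite !sat_Imp. tauto.
Qed.

Lemma sat_nabla_and s a b :
  sat R V s (Nabla (And a b)) -> sat R V s (Nabla a) \/ sat R V s (Nabla b).
Proof.
  simpl. intros (t & u & Rt & Ru & [Hta Htb] & Hu).
  destruct (classic (sat R V u a)); [right|left]; exists t, u; tauto.
Qed.

Lemma sat_nabla_congr s a b : (forall t, sat R V t a <-> sat R V t b) ->
  (sat R V s (Nabla a) <-> sat R V s (Nabla b)).
Proof. intros Hab. simpl. setoid_rewrite Hab. reflexivity. Qed.

Ltac classical_firstorder := simpl; apply NNPP; intros; firstorder fail.

Lemma soundness a : provable a -> forall s, sat R V s a.
Proof.
  induction 1 as [a Ht| | | |a b| | | | | |a b _ IH| |];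
    intros s; unfold Delta, Circ; rewrite ?sat_Imp, ?sat_Iff, ?sat_Or.
  - apply beval_truth_valuation, Ht.
  - classical_firstorder.
  - classical_firstorder.
  - classical_firstorder.
  - apply sat_nabla_and.
  - classical_firstorder.
  - classical_firstorder.
  - classical_firstorder.
  - classical_firstorder.
  - classical_firstorder.
  - apply not_iff_compat, sat_nabla_congr. intros t. apply sat_Iff, IH.
  - classical_firstorder.
  - classical_firstorder.
Qed.

Lemma sat_bigAnd s g l :
  sat R V s (bigAnd g l) <-> sat R V s g /\ Forall (sat R V s) l.
Proof.
  unfold bigAnd. revert g.
  induction l as [|x l IH]; intros g; simpl.
  - split; [intros Hg; split; [exact Hg|constructor]|tauto].
  - rewrite IH, Forall_cons_iff. simpl. tauto.
Qed.
End Soundness.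

Section MaximalConsistent.
Variables (P : Type) (p0 : P) (D : form P -> Prop).
Hypothesis HD : maximal_consistent p0 D.

Lemma mcs_entails l b : Forall D l -> entails p0 l b -> D b.
Proof.
  intros Hl Hent. destruct (proj2 HD b) as [Hb|Hb]; [exact Hb|].
  exfalso. apply (proj1 HD). exists (Neg b :: l). split; [constructor; assumption|].
  apply A0. intros v. specialize (Hent v). simpl in *. boolean_cases v.
Qed.

Lemma mcs_entails1 a b :
  D a -> (forall v, beval v a = true -> beval v b = true) -> D b.
Proof.
  intros Ha H. apply (mcs_entails (l := [a])); [repeat constructor; exact Ha|].
  intros v Hv. apply H. simpl in Hv. boolean_cases v.
Qed.

Lemma mcs_entails2 a c b : D a -> D c ->
  (forall v, beval v a = true -> beval v c = true -> beval v b = true) -> D b.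
Proof.
  intros Ha Hc H. apply (mcs_entails (l := [a; c])); [repeat constructor; assumption|].
  intros v Hv. apply H; simpl in Hv; boolean_cases v.
Qed.

Lemma mcs_entails3 a c d b : D a -> D c -> D d ->
  (forall v, beval v a = true -> beval v c = true -> beval v d = true ->
             beval v b = true) -> D b.
Proof.
  intros Ha Hc Hd H. apply (mcs_entails (l := [a; c; d])); [repeat constructor; assumption|].
  intros v Hv. apply H; simpl in Hv; boolean_cases v.
Qed.

Lemma mcs_provable a : provable a -> D a.
Proof.
  intros H. destruct (proj2 HD a) as [Ha|Ha]; [exact Ha|].
  exfalso. apply (proj1 HD). exists [Neg a]. split; [repeat constructor; exact Ha|].
  apply (provable_entails1 H). boolean_tauto.
Qed.

Lemma mcs_neg a : D (Neg a) <-> ~ D a.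
Proof.
  split.
  - intros Hn Ha. apply (proj1 HD). exists [a; Neg a].
    split; [repeat constructor; assumption|].
    apply A0. boolean_tauto.
  - intros Ha. destruct (proj2 HD a); tauto.
Qed.

Lemma mcs_and a b : D (And a b) <-> D a /\ D b.
Proof.
  split.
  - intros H. split; apply (mcs_entails1 H); boolean_tauto.
  - intros [Ha Hb]. apply (mcs_entails2 Ha Hb). boolean_tauto.
Qed.

Lemma mcs_circ_contra a : D (Bullet a) -> ~ D (Circ a).
Proof. intros Hb Hc. exact (proj1 (mcs_neg (Bullet a)) Hc Hb). Qed.

Lemma mcs_bullet_congr a b : provable (Iff a b) -> D (Bullet a) -> D (Bullet b).
Proof.
  intros H Ha. apply (mcs_entails2 (mcs_provable (provable_bullet_congr H)) Ha).
  boolean_tauto.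
Qed.

Lemma mcs_circ_congr a b : provable (Iff a b) -> D (Circ a) -> D (Circ b).
Proof.
  intros H Ha. apply (mcs_entails2 (mcs_provable (provable_bullet_congr H)) Ha).
  boolean_tauto.
Qed.

Lemma mcs_delta_congr a b : provable (Iff a b) -> D (Delta a) -> D (Delta b).
Proof.
  intros H Ha. apply (mcs_entails2 (mcs_provable (provable_nabla_congr H)) Ha).
  boolean_tauto.
Qed.

Lemma mcs_bullet_T a : D (Bullet a) -> D a.
Proof. intros H. apply (mcs_entails2 (mcs_provable (A1 a)) H). boolean_tauto. Qed.

Lemma mcs_circ_of_neg a : D (Neg a) -> D (Circ a).
Proof. intros H. apply (mcs_entails2 (mcs_provable (A1 a)) H). boolean_tauto. Qed.

Lemma mcs_circ_and a b : D (Circ a) -> D (Circ b) -> D (Circ (And a b)).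
Proof. intros Ha Hb. apply (mcs_entails3 (mcs_provable (A5 a b)) Ha Hb). boolean_tauto. Qed.

Lemma mcs_delta_and a b : D (Delta a) -> D (Delta b) -> D (Delta (And a b)).
Proof. intros Ha Hb. apply (mcs_entails3 (mcs_provable (A4 a b)) Ha Hb). boolean_tauto. Qed.

Lemma mcs_delta_neg a : D (Delta a) -> D (Delta (Neg a)).
Proof. intros H. apply (mcs_entails2 (mcs_provable (A2 a)) H). boolean_tauto. Qed.

Lemma mcs_nabla_neg a : D (Nabla a) -> D (Nabla (Neg a)).
Proof. intros H. apply (mcs_entails2 (mcs_provable (A2 a)) H). boolean_tauto. Qed.

Lemma mcs_delta_or a b : D (Delta a) -> D (Delta b) -> D (Delta (Or a b)).
Proof. intros Ha Hb. apply mcs_delta_neg, mcs_delta_and; apply mcs_delta_neg; assumption. Qed.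

Lemma mcs_delta_of_circ a : D (Circ a) -> D (Circ (Neg a)) -> D (Delta a).
Proof. intros Ha Hb. apply (mcs_entails3 (mcs_provable (A6 a)) Ha Hb). boolean_tauto. Qed.

Lemma mcs_nabla_bullet a : D (Nabla a) -> D (Bullet a) \/ D (Bullet (Neg a)).
Proof.
  intros H. destruct (classic (D (Bullet a))) as [Hb|Hb]; [left; exact Hb|right].
  apply mcs_neg in Hb. apply (mcs_entails3 (mcs_provable (A6 a)) H Hb). boolean_tauto.
Qed.

Lemma mcs_circ_mono a b : provable (Imp a b) -> D a -> D (Circ a) -> D (Circ b).
Proof.
  intros H Ha Hc.
  assert (Hc' : D (Circ (Imp (Neg b) a))).
  { apply (mcs_entails3 (mcs_provable (A3 a (Neg b))) Ha Hc). boolean_tauto. }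
  apply (mcs_circ_congr (a := Imp (Neg b) a)); [|exact Hc'].
  apply (provable_entails1 H). boolean_tauto.
Qed.

Lemma mcs_bullet_of_imp a b : provable (Imp a b) -> D (Bullet b) -> D a -> D (Bullet a).
Proof.
  intros H Hb Ha.
  assert (Hb' : D (Bullet (Imp (Neg b) a))).
  { apply (mcs_bullet_congr (a := b)); [|exact Hb].
    apply (provable_entails1 H). boolean_tauto. }
  apply (mcs_entails3 (mcs_provable (A3 a (Neg b))) Hb' Ha). boolean_tauto.
Qed.

(* [Delta a /\ Bullet (Neg a)] says that [a] fails here but holds at every successor. *)
Lemma mcs_circ_or a c : D (Delta a) -> D (Bullet (Neg a)) -> D (Circ (Or a c)).
Proof.
  intros Hd Hb.
  assert (Hb' : D (Bullet (Imp a (Neg a)))).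
  { apply (mcs_bullet_congr (a := Neg a)); [apply A0; boolean_tauto|exact Hb]. }
  assert (Hc : D (Circ (Imp (Neg a) c))).
  { apply (mcs_entails3 (mcs_provable (A7 a (Neg a) c)) Hb' Hd). boolean_tauto. }
  apply (mcs_circ_congr (a := Imp (Neg a) c)); [apply A0; boolean_tauto|exact Hc].
Qed.

Definition boxed (X : form P) : Prop :=
  (D X /\ D (Circ X)) \/ (D (Neg X) /\ D (Delta X) /\ D (Bullet (Neg X))).

Lemma boxed_provable X : provable X -> boxed X.
Proof. intros H. left. split; apply mcs_provable; [exact H|exact (R2 H)]. Qed.

Lemma boxed_imp X Y : provable (Imp X Y) -> boxed X -> boxed Y.
Proof.
  intros H [[Hx Hcx]|[Hnx [Hdx Hbx]]].
  - left. split; [|exact (mcs_circ_mono H Hx Hcx)].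
    apply (mcs_entails2 (mcs_provable H) Hx). boolean_tauto.
  - destruct (classic (D Y)) as [Hy|Hy].
    + left. split; [exact Hy|].
      apply (mcs_circ_congr (a := Or X Y)); [|exact (mcs_circ_or Y Hdx Hbx)].
      apply (provable_entails1 H). boolean_tauto.
    + apply mcs_neg in Hy. right. split; [exact Hy|split].
      * (* [Y] is [X \/ (Y /\ ~X)], and [Y /\ ~X] fails here and at every successor. *)
        assert (Hcircs : D (Circ (And Y (Neg X))) /\ D (Circ (Neg (And Y (Neg X))))).
        { split.
          - apply mcs_circ_of_neg. apply (mcs_entails1 Hy). boolean_tauto.
          - apply (mcs_circ_congr (a := Or X (Neg Y))); [apply A0; boolean_tauto|].
            exact (mcs_circ_or _ Hdx Hbx). }
        apply (mcs_delta_congr (a := Or X (And Y (Neg X)))).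
        -- apply (provable_entails1 H). boolean_tauto.
        -- apply (mcs_delta_or Hdx). apply mcs_delta_of_circ; apply Hcircs.
      * apply (mcs_bullet_of_imp (b := Neg X)); [|exact Hbx|exact Hy].
        apply (provable_entails1 H). boolean_tauto.
Qed.

Lemma boxed_and_mixed X Y : D X -> D (Circ X) ->
  D (Neg Y) -> D (Delta Y) -> D (Bullet (Neg Y)) -> boxed (And X Y).
Proof.
  intros Hx Hcx Hny Hdy Hby. right. split; [|split].
  - apply (mcs_entails1 Hny). boolean_tauto.
  - apply mcs_delta_and; [apply (mcs_delta_of_circ Hcx)|exact Hdy].
    apply mcs_circ_of_neg. apply (mcs_entails1 Hx). boolean_tauto.
  - destruct (proj2 HD (Bullet (Neg (And X Y)))) as [Hb|Hc]; [exact Hb|exfalso].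
    apply (mcs_circ_contra Hby).
    apply (mcs_circ_mono (a := And X (Neg (And X Y)))); [apply A0; boolean_tauto| |].
    + apply (mcs_entails2 Hx Hny). boolean_tauto.
    + exact (mcs_circ_and Hcx Hc).
Qed.

Lemma boxed_and X Y : boxed X -> boxed Y -> boxed (And X Y).
Proof.
  intros [[Hx Hcx]|[Hnx [Hdx Hbx]]] [[Hy Hcy]|[Hny [Hdy Hby]]].
  - left. split; [apply mcs_and; split; assumption|exact (mcs_circ_and Hcx Hcy)].
  - exact (boxed_and_mixed Hx Hcx Hny Hdy Hby).
  - apply (boxed_imp (X := And Y X)); [apply A0; boolean_tauto|].
    exact (boxed_and_mixed Hy Hcy Hnx Hdx Hbx).
  - right. split; [|split].
    + apply (mcs_entails1 Hnx). boolean_tauto.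
    + exact (mcs_delta_and Hdx Hdy).
    + destruct (proj2 HD (Bullet (Neg (And X Y)))) as [Hb|Hc]; [exact Hb|exfalso].
      apply (mcs_circ_contra Hby).
      apply (mcs_circ_congr (a := And (Neg (And X Y)) (Or X (Neg Y))));
        [apply A0; boolean_tauto|].
      exact (mcs_circ_and Hc (mcs_circ_or _ Hdx Hbx)).
Qed.

Lemma boxed_conjs l : Forall boxed l -> boxed (conjs p0 l).
Proof.
  induction 1 as [|x l Hx _ IH]; simpl.
  - apply boxed_provable, A0. boolean_tauto.
  - exact (boxed_and Hx IH).
Qed.

Lemma boxed_neg_of_inconsistent psi :
  inconsistent p0 (fun x => boxed x \/ x = psi) -> boxed (Neg psi).
Proof.
  intros Hi. destruct (inconsistent_add Hi) as [m [Hm Hp]].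
  exact (boxed_imp Hp (boxed_conjs Hm)).
Qed.

Lemma mcs_delta_boxed a : D (Delta a) -> boxed a \/ boxed (Neg a).
Proof.
  intros Hd. destruct (proj2 HD a) as [Ha|Hna].
  - destruct (proj2 HD (Bullet a)) as [Hb|Hc].
    + right. right. split; [apply (mcs_entails1 Ha); boolean_tauto|split].
      * exact (mcs_delta_neg Hd).
      * apply (mcs_bullet_congr (a := a)); [apply A0; boolean_tauto|exact Hb].
    + left. left. split; assumption.
  - destruct (proj2 HD (Bullet (Neg a))) as [Hb|Hc].
    + left. right. split; [|split]; assumption.
    + right. left. split; assumption.
Qed.

Lemma not_boxed_of_nabla a : D (Nabla a) -> ~ boxed a.
Proof.
  intros Hn [[Ha Hc]|[Hna [Hd _]]].
  - destruct (mcs_nabla_bullet Hn) as [Hb|Hb].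
    + exact (mcs_circ_contra Hb Hc).
    + exact (proj1 (mcs_neg a) (mcs_bullet_T Hb) Ha).
  - exact (proj1 (mcs_neg (Nabla a)) Hd Hn).
Qed.

Lemma not_boxed_of_bullet a : D (Bullet a) -> ~ boxed a.
Proof.
  intros Hb [[_ Hc]|[Hna _]].
  - exact (mcs_circ_contra Hb Hc).
  - exact (proj1 (mcs_neg a) Hna (mcs_bullet_T Hb)).
Qed.

Lemma not_boxed_of_refutable a : provable (Neg a) -> ~ boxed a.
Proof.
  intros H [[Ha _]|[_ [_ Hb]]].
  - exact (proj1 (mcs_neg a) (mcs_provable H) Ha).
  - exact (mcs_circ_contra Hb (mcs_provable (R2 H))).
Qed.
End MaximalConsistent.

Section CanonicalModel.
Variables (P : Type) (p0 : P).

Definition world : Type := {D : form P -> Prop | maximal_consistent p0 D}.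

Definition canonical_rel (s t : world) : Prop :=
  forall X, boxed (proj1_sig s) X -> proj1_sig t X.

Definition canonical_val (p : P) (s : world) : Prop := proj1_sig s (Var p).

Lemma canonical_successor (s : world) psi :
  ~ boxed (proj1_sig s) (Neg psi) -> exists t, canonical_rel s t /\ proj1_sig t psi.
Proof.
  intros Hpsi.
  destruct (lindenbaum (p0 := p0) (G := fun x => boxed (proj1_sig s) x \/ x = psi))
    as [D [HD Hsub]].
  { intros Hi. exact (Hpsi (boxed_neg_of_inconsistent (proj2_sig s) Hi)). }
  exists (exist _ D HD). split.
  - intros X HX. apply Hsub. left. exact HX.
  - apply Hsub. right. reflexivity.
Qed.

Lemma canonical_successor_neg (s : world) a :
  ~ boxed (proj1_sig s) a -> exists t, canonical_rel s t /\ ~ proj1_sig t a.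
Proof.
  intros Ha. destruct (canonical_successor (s := s) (psi := Neg a)) as [t [Hst Ht]].
  - intros Hb. apply Ha. apply (boxed_imp (proj2_sig s) (X := Neg (Neg a)));
      [apply A0; boolean_tauto|exact Hb].
  - exists t. split; [exact Hst|]. exact (proj1 (mcs_neg (proj2_sig t) a) Ht).
Qed.

Lemma canonical_rel_serial : serial canonical_rel.
Proof.
  intros s. destruct (canonical_successor (s := s) (psi := verum p0)) as [t [Hst _]].
  - apply (not_boxed_of_refutable (proj2_sig s)). apply A0. boolean_tauto.
  - exists t. exact Hst.
Qed.

Section TruthStep.
Variable a : form P.
Hypothesis IH : forall t : world, sat canonical_rel canonical_val t a <-> proj1_sig t a.

Lemma truth_nabla (s : world) :
  sat canonical_rel canonical_val s (Nabla a) <-> proj1_sig s (Nabla a).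
Proof.
  destruct s as [D HD]. simpl. split.
  - intros (t & u & Rt & Ru & Ht & Hu). rewrite IH in Ht, Hu.
    apply NNPP. intros Hn. apply (mcs_neg HD) in Hn.
    destruct (mcs_delta_boxed HD Hn) as [Hb|Hb].
    + exact (Hu (Ru a Hb)).
    + exact (proj1 (mcs_neg (proj2_sig t) a) (Rt _ Hb) Ht).
  - intros Hn.
    destruct (canonical_successor (s := exist _ D HD) (psi := a)) as [t [Rt Ht]].
    { exact (not_boxed_of_nabla HD (mcs_nabla_neg HD Hn)). }
    destruct (canonical_successor_neg (s := exist _ D HD) (a := a)) as [u [Ru Hu]].
    { exact (not_boxed_of_nabla HD Hn). }
    exists t, u. rewrite !IH. auto.
Qed.

Lemma truth_bullet (s : world) :
  sat canonical_rel canonical_val s (Bullet a) <-> proj1_sig s (Bullet a).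
Proof.
  simpl. rewrite IH. destruct s as [D HD]. simpl. split.
  - intros [Ha (t & Rt & Ht)]. rewrite IH in Ht.
    destruct (proj2 HD (Bullet a)) as [Hb|Hc]; [exact Hb|].
    exfalso. apply Ht. apply Rt. left. split; assumption.
  - intros Hb. split; [exact (mcs_bullet_T HD Hb)|].
    destruct (canonical_successor_neg (s := exist _ D HD) (a := a)) as [t [Rt Ht]].
    { exact (not_boxed_of_bullet HD Hb). }
    exists t. rewrite IH. auto.
Qed.
End TruthStep.

Lemma truth_lemma a (s : world) :
  sat canonical_rel canonical_val s a <-> proj1_sig s a.
Proof.
  revert s. induction a as [p|a IH|a IHa b IHb|a IH|a IH]; intros s.
  - reflexivity.
  - simpl. rewrite IH, (mcs_neg (proj2_sig s)). reflexivity.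
  - simpl. rewrite IHa, IHb, (mcs_and (proj2_sig s)). reflexivity.
  - exact (truth_nabla IH s).
  - exact (truth_bullet IH s).
Qed.
End CanonicalModel.

Lemma derives_sat P S (R : S -> S -> Prop) (V : P -> S -> Prop) Gamma phi s :
  derives Gamma phi -> (forall g, Gamma g -> sat R V s g) -> sat R V s phi.
Proof.
  intros [Hp|(g & l & Hg & Hl & Hp)] HG; [exact (soundness R V Hp s)|].
  apply (proj1 (sat_Imp R V s _ _) (soundness R V Hp s)), sat_bigAnd.
  split; [exact (HG g Hg)|]. apply Forall_forall. auto.
Qed.

Lemma consistent_of_not_derives P (p0 : P) Gamma phi :
  ~ derives Gamma phi -> ~ inconsistent p0 (fun x => Gamma x \/ x = Neg phi).
Proof.
  intros Hnd Hi. apply Hnd. destruct (inconsistent_add Hi) as [[|g l] [Hm Hp]].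
  - left. apply (provable_entails1 Hp). boolean_tauto.
  - right. apply Forall_cons_iff in Hm. destruct Hm as [Hg Hl].
    exists g, l. split; [exact Hg|split; [apply Forall_forall, Hl|]].
    apply (provable_entails1 Hp). intros v. unfold Imp. cbn [beval].
    rewrite (beval_bigAnd p0). boolean_cases v.
Qed.

Lemma derives_of_serial_consequence P (p0 : P) Gamma phi :
  (forall (S : Type) (R : S -> S -> Prop) (V : P -> S -> Prop), serial R ->
     forall s : S, (forall g, Gamma g -> sat R V s g) -> sat R V s phi) ->
  derives Gamma phi.
Proof.
  intros Hsem. apply NNPP. intros Hnd.
  destruct (lindenbaum (consistent_of_not_derives (p0 := p0) Hnd)) as [D [HD Hsub]].
  set (s := exist _ D HD : world p0).
  assert (Hphi : D phi).
  { apply (truth_lemma phi s), Hsem; [exact (canonical_rel_serial (p0 := p0))|].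
    intros g Hg. apply (truth_lemma g s), Hsub. left. exact Hg. }
  exact (proj1 (mcs_neg HD phi) (Hsub _ (or_intror eq_refl)) Hphi).
Qed.

Theorem theorem2 (P : Type) (p0 : P) (Gamma : form P -> Prop) (phi : form P) :
  derives Gamma phi <->
  (forall (S : Type) (R : S -> S -> Prop) (V : P -> S -> Prop),
      serial R ->
      forall s : S, (forall g, Gamma g -> sat R V s g) -> sat R V s phi).
Proof.
  split.
  - intros Hd S R V _ s. exact (derives_sat Hd).
  - apply (derives_of_serial_consequence p0).
Qed.
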